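(* Let $\Gamma_1=(N,A,u)$ and $\Gamma_2=(M,B,v)$ be games and let $g=(\pi;(\tau_i)_{i\in N})$ be a cardinal game isomorphism from $\Gamma_1$ to $\Gamma_2$. Then for each $i\in N$ there exist $\beta_i>0$ and $\gamma_i\in\mathbb{R}$ with $\beta_i\tilde u_i(\sigma)+\gamma_i=\tilde v_{g.i}(g.\sigma)$ for all $\sigma\in\Delta(A)$, and $g$ preserves: (1) the players' best response correspondences: for all $i\in N$ and $\sigma\in\Delta(A)$, $\sigma_i\in\tilde b_i(\sigma_{-i})$ in $\Gamma_1$ if and only if $(g.\sigma)_{g.i}\in\tilde b_{g.i}((g.\sigma)_{-g.i})$ in $\Gamma_2$; (2) the game's best response correspondence: for all $\sigma,\sigma'\in\Delta(A)$, $\sigma\in\tilde b(\sigma')$ in $\Gamma_1$ if and only if $g.\sigma\in\tilde b(g.\sigma')$ in $\Gamma_2$; (3) mixed strategy Nash equilibria: $\sigma$ is a Nash equilibrium of $\Gamma_1$ if and only if $g.\sigma$ is a Nash equilibrium of $\Gamma_2$; (4) strict dominance of mixed strategies over pure strategies: for $i\in N$, $\sigma_i\in\Delta(A_i)$ and $s_i\in A_i$, $\sigma_i$ strictly dominates $s_i$ for player $i$ in $\Gamma_1$ if and only if $\sigma_i\circ\tau_i^{-1}$ strictly dominates $\tau_i(s_i)$ for player $\pi(i)$ in $\Gamma_2$.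
   Context: A (finite normal-form) game $\Gamma=(N,A,u)$ consists of a finite set $N$ of at least two players, a finite non-empty strategy set $A_i$ for each $i\in N$, $A=\times_{i\in N}A_i$, and utility functions $u_i:A\to\mathbb{R}$. $\Delta(A_i)$ is the set of probability distributions on $A_i$, $\Delta(A)=\times_{i\in N}\Delta(A_i)$, $\Delta(A_{-i})=\times_{j\neq i}\Delta(A_j)$, $\sigma(s)=\prod_i\sigma_i(s_i)$, and the expected utility is $\tilde u_i(\sigma)=\sum_{s\in A}\sigma(s)u_i(s)$ (pure strategies are identified with point-mass distributions). A game bijection $g=(\pi;(\tau_i)_{i\in N})$ from $\Gamma_1=(N,A,u)$ to $\Gamma_2=(M,B,v)$ consists of a bijection $\pi:N\to M$ and bijections $\tau_i:A_i\to B_{\pi(i)}$; write $g.i=\pi(i)$ and $g.\sigma\in\Delta(B)$ for the mixed profile whose component for player $\pi(i)$ is $\sigma_i\circ\tau_i^{-1}$. $g$ is a cardinal game isomorphism if for all $i\in N$, $\sigma,\sigma'\in\Delta(A)$: $\tilde u_i(\sigma)\le\tilde u_i(\sigma')\iff\tilde v_{g.i}(g.\sigma)\le\tilde v_{g.i}(g.\sigma')$. Player $i$'s best response correspondence is $\tilde b_i(\sigma_{-i})=\arg\max_{\sigma_i\in\Delta(A_i)}\tilde u_i(\sigma_i,\sigma_{-i})$; the game's is $\tilde b(\sigma)=\{\sigma'\in\Delta(A):\sigma_i'\in\tilde b_i(\sigma_{-i})\ \forall i\}$. $\sigma$ is a Nash equilibrium if no player $i$ has $\sigma_i'\in\Delta(A_i)$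 with $\tilde u_i(\sigma_i',\sigma_{-i})>\tilde u_i(\sigma_i,\sigma_{-i})$. $\sigma_i\in\Delta(A_i)$ strictly dominates $s_i\in A_i$ if $\tilde u_i(\sigma_i,\sigma_{-i})>\tilde u_i(s_i,\sigma_{-i})$ for all $\sigma_{-i}\in\Delta(A_{-i})$. *)

From HB Require Import structures.
From mathcomp Require Import all_boot all_order all_algebra.
From mathcomp Require Import reals.
Unset Printing Implicit Defensive.
Import Order.TTheory GRing.Theory Num.Theory.
Local Open Scope ring_scope.

Record game (R : realType) := Game {
  player : finType;
  strat : player -> finType;
  util : player -> {dffun forall i : player, strat i} -> R }.
Arguments player {R} g.
Arguments strat {R} g i.
Arguments util {R} g i p.

Definition is_game {R : realType} (G : game R) : Prop :=
  (1 < #|player G|)%N /\ forall i, (0 < #|strat G i|)%N.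

Definition mixed_strat {R : realType} {T : finType} (x : T -> R) : Prop :=
  (forall a, 0 <= x a) /\ \sum_(a : T) x a = 1.

Definition mprofile {R : realType} (G : game R) :=
  forall i : player G, strat G i -> R.

(* sigma in Delta(A) = product of the Delta(A_i). *)
Definition mixed_profile {R : realType} {G : game R} (s : mprofile G) : Prop :=
  forall i, mixed_strat (s i).

Definition pt {R : realType} {T : finType} (a0 : T) : T -> R :=
  fun a => (a == a0)%:R.

Definition EU {R : realType} {G : game R} (i : player G) (s : mprofile G) : R :=
  \sum_(p : {dffun forall j : player G, strat G j})
     (\prod_(j : player G) s j (p j)) * util G i p.

Definition dev {R : realType} {G : game R} (s : mprofile G) (i : player G)
  (x : strat G i -> R) : mprofile G := @dfwith _ (fun j => strat G j -> R) s i x.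


Definition best_resp {R : realType} {G : game R} (i : player G) (s : mprofile G)
  (x : strat G i -> R) : Prop :=
  mixed_strat x /\
  forall y : strat G i -> R, mixed_strat y -> EU i (dev s i y) <= EU i (dev s i x).

Definition game_best_resp {R : realType} {G : game R} (s s' : mprofile G) : Prop :=
  mixed_profile s /\ forall i, best_resp i s' (s i).

Definition nash {R : realType} {G : game R} (s : mprofile G) : Prop :=
  forall i (y : strat G i -> R), mixed_strat y -> ~ (EU i (dev s i y) > EU i s).

(* x in Delta(A_i) strictly dominates pure strategy a for player i:
   for all sigma_{-i} (given as the other components of a mixed profile). *)
Definition strictly_dominates {R : realType} {G : game R} (i : player G)
  (x : strat G i -> R) (a : strat G i) : Prop :=
  forall s : mprofile G, mixed_profile s ->
    EU i (dev s i x) > EU i (dev s i (pt a)).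

Record game_bij (R : realType) (G1 G2 : game R) := GameBij {
  gpi : player G1 -> player G2;
  gpiinv : player G2 -> player G1;
  gpiK : cancel gpi gpiinv;
  gpiinvK : cancel gpiinv gpi;
  gtau : forall i, strat G1 i -> strat G2 (gpi i);
  gtauinv : forall i, strat G2 (gpi i) -> strat G1 i;
  gtauK : forall i, cancel (@gtau i) (@gtauinv i);
  gtauinvK : forall i, cancel (@gtauinv i) (@gtau i) }.
Arguments game_bij {R} G1 G2.
Arguments gpi {R G1 G2} g i.
Arguments gpiinv {R G1 G2} g m.
Arguments gpiK {R G1 G2} g x.
Arguments gpiinvK {R G1 G2} g x.
Arguments gtauK {R G1 G2} g i x.
Arguments gtauinvK {R G1 G2} g i x.
Arguments gtau {R G1 G2} g {i} a.
Arguments gtauinv {R G1 G2} g {i} b.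

(* g.sigma : the component for player pi(i) is sigma_i o tau_i^{-1}.
   For m : player G2 with i := pi^{-1}(m), transport b : B_m to B_{pi(i)}. *)
Definition gact {R : realType} {G1 G2 : game R} (g : game_bij G1 G2)
  (s : mprofile G1) : mprofile G2 :=
  fun m b =>
    let i := gpiinv g m in
    s i (gtauinv g (eq_rect m (fun k => strat G2 k) b _ (esym (gpiinvK g m)))).

Definition cardinal_iso {R : realType} {G1 G2 : game R} (g : game_bij G1 G2) : Prop :=
  forall (i : player G1) (s s' : mprofile G1), mixed_profile s -> mixed_profile s' ->
    (EU i s <= EU i s' <-> EU (gpi g i) (gact g s) <= EU (gpi g i) (gact g s')).

From HB Require Import structures.
From mathcomp Require Import all_boot all_order all_algebra.
From mathcomp Require Import reals boolp.
From mathcomp Require Import ring lra.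
Import Order.TTheory GRing.Theory Num.Theory.
Local Open Scope ring_scope.

(* Expected utility is affine in each player's mixed strategy, and [g] turns a
   deviation of player [i] into a deviation of player [g.i]; so every
   preservation claim reduces to the order equivalence of [EU i] and
   [EU (gpi g i) \o gact g].  For the affine relation, let [f] and [h] be
   ordinally equivalent and affine in each component.  On every one-player
   slice, [h] is a positive affine function of [f].  At a fully mixed profile
   [f] can still be increased along a nonconstant slice, so two such slices
   meeting the same level of [f] have the same slope; walking from one fully
   mixed profile to another, one player at a time, therefore keeps [h - al f]
   constant.  Finally, a function that is affine in each component and
   vanishes on the fully mixed profiles vanishes on all mixed profiles. *)

Lemma mixed_strat_bij {R : realType} {T U : finType} {e : T -> U} {x : U -> R} :
  bijective e -> mixed_strat (fun a => x (e a)) <-> mixed_strat x.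
Proof.
move=> e_bij; have [e' eK e'K] := e_bij.
have sumE : \sum_a x (e a) = \sum_b x b by rewrite [RHS](reindex e) //; exact: onW_bij.
split=> [[x_ge0 x_sum]|[x_ge0 x_sum]]; split; rewrite ?sumE // -?sumE //.
by move=> b; rewrite -[b]e'K.
Qed.

Section Profiles.
Context {R : realType} {G : game R}.
Implicit Types (s : mprofile G).

Lemma dev_in s k x : dev s k x k = x.
Proof. exact: dfwith_in. Qed.

Lemma dev_out s k x j : k != j -> dev s k x j = s j.
Proof. exact: dfwith_out. Qed.

Lemma dev_dev s k x y : dev (dev s k x) k y = dev s k y.
Proof.
apply: functional_extensionality_dep => j.
by case: (eqVneq k j) => [<-|nkj]; rewrite ?dev_in ?dev_out.
Qed.

Lemma dev_id s k : dev s k (s k) = s.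
Proof.
apply: functional_extensionality_dep => j.
by case: (eqVneq k j) => [<-|nkj]; rewrite ?dev_in ?dev_out.
Qed.

Lemma dev_forall (P : forall j, (strat G j -> R) -> Prop) s k x :
  (forall j, P j (s j)) -> P k x -> forall j, P j (dev s k x j).
Proof. by move=> Ps Px j; case: (eqVneq k j) => [<-|nkj]; rewrite ?dev_in ?dev_out. Qed.

Lemma mixed_dev {s k x} :
  mixed_profile s -> mixed_strat x -> mixed_profile (dev s k x).
Proof. exact: (dev_forall (fun j => @mixed_strat R (strat G j))). Qed.

Lemma dev_path_ind (Q : forall j, (strat G j -> R) -> Prop) (P : mprofile G -> Prop) s t :
  (forall j, Q j (s j)) -> (forall j, Q j (t j)) ->
  (forall r k x, (forall j, Q j (r j)) -> Q k x -> P r -> P (dev r k x)) ->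
  P s -> P t.
Proof.
move=> Qs Qt step Ps.
pose r l := foldr (fun k r => dev r k (t k)) s l.
have rE l j : r l j = if j \in l then t j else s j.
  elim: l => [|k l IH] //=; rewrite in_cons.
  by case: (eqVneq k j) => [<-|nkj]; rewrite ?dev_in ?dev_out ?IH.
have Qr l j : Q j (r l j) by rewrite rE; case: ifP.
have Pr l : P (r l) by elim: l => //= k l IH; apply: step.
suff -> : t = r (enum (player G)) by [].
by apply: functional_extensionality_dep => j; rewrite rE mem_enum.
Qed.

Lemma sum_mul_pt {T : finType} (x : T -> R) b : \sum_a x a * pt a b = x b.
Proof.
rewrite (bigD1 b) //= /pt eqxx mulr1 big1 ?addr0 // => a /negbTE.
by rewrite eq_sym => ->; rewrite mulr0.
Qed.

Lemma mixed_pt {T : finType} (a : T) : mixed_strat (pt a : T -> R).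
Proof.
split; first by move=> b; rewrite /pt ler0n.
rewrite -[RHS](@sum_mul_pt T (fun _ => 1) a); apply: eq_bigr => b _.
by rewrite mul1r /pt eq_sym.
Qed.

Definition multiaffine (F : mprofile G -> R) :=
  forall s k (x : strat G k -> R), mixed_strat x ->
    F (dev s k x) = \sum_a x a * F (dev s k (pt a)).

Lemma prod_dev s k y (p : {dffun forall j : player G, strat G j}) :
  \prod_j dev s k y j (p j) = y (p k) * \prod_(j | j != k) s j (p j).
Proof.
rewrite (bigD1 k) //= dev_in; congr (_ * _).
by apply: eq_bigr => j njk; rewrite dev_out // eq_sym.
Qed.

Lemma EU_multiaffine i : multiaffine (EU i).
Proof.
move=> s k x _; rewrite /EU.
under [RHS]eq_bigr do rewrite mulr_sumr.
rewrite [RHS]exchange_big /=; apply: eq_bigr => p _.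
under [RHS]eq_bigr do rewrite prod_dev !mulrA.
by rewrite prod_dev -!mulr_suml sum_mul_pt.
Qed.

Definition mix {T : finType} (t : R) (x y : T -> R) : T -> R :=
  fun a => (1 - t) * x a + t * y a.

Lemma mixed_mix {T : finType} {t : R} {x y : T -> R} : 0 <= t <= 1 ->
  mixed_strat x -> mixed_strat y -> mixed_strat (mix t x y).
Proof.
move=> /andP[t_ge0 t_le1] [x_ge0 x_sum] [y_ge0 y_sum]; split.
  by move=> a; rewrite /mix addr_ge0 // mulr_ge0 // subr_ge0.
by rewrite /mix big_split /= -!mulr_sumr x_sum y_sum; lra.
Qed.

Lemma multiaffine_mix {F s k t} {x y : strat G k -> R} : multiaffine F ->
  0 <= t <= 1 -> mixed_strat x -> mixed_strat y ->
  F (dev s k (mix t x y)) = (1 - t) * F (dev s k x) + t * F (dev s k y).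
Proof.
move=> F_aff t01 mx my.
rewrite (F_aff _ _ _ (mixed_mix t01 mx my)) (F_aff _ _ _ mx) (F_aff _ _ _ my).
rewrite !mulr_sumr -big_split /=.
by apply: eq_bigr => a _; rewrite /mix mulrDl !mulrA.
Qed.

Definition fully_mixed_strat {T : finType} (x : T -> R) :=
  mixed_strat x /\ forall a, 0 < x a.

Definition fully_mixed s := forall j, fully_mixed_strat (s j).

Lemma fully_mixed_mixed {s} : fully_mixed s -> mixed_profile s.
Proof. by move=> fs j; case: (fs j). Qed.

Lemma fully_mixed_dev s k x :
  fully_mixed s -> fully_mixed_strat x -> fully_mixed (dev s k x).
Proof. exact: (dev_forall (fun j => @fully_mixed_strat (strat G j))). Qed.

Hypothesis strat_nonempty : forall j, (0 < #|strat G j|)%N.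

Definition uniform : mprofile G := fun j _ => #|strat G j|%:R^-1.

Lemma fully_mixed_uniform : fully_mixed uniform.
Proof.
move=> j; have n_gt0 : (0 : R) < #|strat G j|%:R by rewrite ltr0n.
split; last by move=> a; rewrite /uniform invr_gt0.
split; first by move=> a; rewrite /uniform invr_ge0 ltW.
by rewrite /uniform sumr_const -(mulr_natl (#|strat G j|%:R^-1)) mulfV // gt_eqF.
Qed.

(* Mixing a component with the uniform strategy makes it fully mixed, and
   [F s] is an affine combination of the two resulting values. *)
Lemma multiaffine_eq0 {F} : multiaffine F ->
  (forall s, fully_mixed s -> F s = 0) -> forall s, mixed_profile s -> F s = 0.
Proof.
move=> F_aff F0.
suff F0l (l : seq (player G)) s : mixed_profile s ->
    (forall j, j \notin l -> fully_mixed_strat (s j)) -> F s = 0.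
  by move=> s ms; apply: (F0l (enum (player G))) => // j; rewrite mem_enum.
elim: l s => [|k l IH] s ms fms; first by apply: F0 => j; apply: fms.
have [u_mixed u_pos] := fully_mixed_uniform k.
have F0dev z : fully_mixed_strat z -> F (dev s k z) = 0.
  move=> fz; apply: IH; first exact: mixed_dev fz.1.
  move=> j jl; case: (eqVneq k j) => [<-|nkj]; rewrite ?dev_in ?dev_out //.
  by apply: fms; rewrite in_cons negb_or jl eq_sym nkj.
have half01 : 0 <= (1 / 2 : R) <= 1 by lra.
have := multiaffine_mix (s := s) F_aff half01 (ms k) u_mixed.
rewrite dev_id !F0dev //; first lra.
split; first exact: mixed_mix.
by move=> a; rewrite /mix; have := (ms k).1 a; have := u_pos a; lra.
Qed.

Section OrdinalEquivalence.
Context {f h : mprofile G -> R}.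
Hypotheses (f_aff : multiaffine f) (h_aff : multiaffine h).
Hypothesis f_h_ord : forall s s', mixed_profile s -> mixed_profile s' ->
  (f s <= f s' <-> h s <= h s').

Lemma ord_eq {s s'} : mixed_profile s -> mixed_profile s' -> f s = f s' -> h s = h s'.
Proof.
move=> ms ms' fss'; apply/eqP; rewrite eq_le.
by apply/andP; split; [apply: (f_h_ord _ _ ms ms').1 | apply: (f_h_ord _ _ ms' ms).1];
  rewrite fss'.
Qed.

Lemma ord_lt {s s'} : mixed_profile s -> mixed_profile s' -> f s < f s' -> h s < h s'.
Proof. by move=> ms ms'; rewrite !ltNge; apply: contraNN => /(f_h_ord _ _ ms' ms). Qed.

Definition slice_nonconst s k :=
  exists a a', f (dev s k (pt a)) != f (dev s k (pt a')).

Definition slice_affine s k (al c : R) :=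
  forall x, mixed_strat x -> h (dev s k x) = al * f (dev s k x) + c.

Lemma slice_nonconst_dev s k x : slice_nonconst s k -> slice_nonconst (dev s k x) k.
Proof. by case=> a [a' ne]; exists a, a'; rewrite !dev_dev. Qed.

Lemma slice_affine_dev s k x al c :
  slice_affine s k al c -> slice_affine (dev s k x) k al c.
Proof. by move=> A y my; rewrite dev_dev; apply: A. Qed.

Lemma slice_affine_at {s k al c} :
  mixed_profile s -> slice_affine s k al c -> h s = al * f s + c.
Proof. by move=> ms A; rewrite -(dev_id s k) A. Qed.

Lemma multiaffine_gap al c : multiaffine (fun s => h s - (al * f s + c)).
Proof.
move=> s k x mx; rewrite f_aff // h_aff //.
under [RHS]eq_bigr do rewrite mulrBr mulrDr mulrCA.
by rewrite sumrB big_split /= -!mulr_sumr -mulr_suml mx.2 mul1r.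
Qed.

Lemma slice_affine_of_pt s k al c :
  (forall a, h (dev s k (pt a)) = al * f (dev s k (pt a)) + c) -> slice_affine s k al c.
Proof.
move=> A x mx; apply/eqP; rewrite -subr_eq0; apply/eqP.
by rewrite (multiaffine_gap al c) //; apply: big1 => a _; rewrite A subrr mulr0.
Qed.

(* The slope is read off the extreme pure strategies of the slice; any other
   pure strategy has the same [f]-value as a mixture of those two. *)
Lemma slice_affine_nonconst {s k} : mixed_profile s -> slice_nonconst s k ->
  exists al c, 0 < al /\ slice_affine s k al c.
Proof.
move=> ms [b0 [b1 nd]].
pose F a := f (dev s k (pt a)); pose H a := h (dev s k (pt a)).
have [a0 _ min_a0] := @arg_minP _ R _ b0 xpredT F isT.
have [a1 _ max_a1] := @arg_maxP _ R _ b0 xpredT F isT.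
have lt01 : F a0 < F a1.
  rewrite lt_neqAle min_a0 // andbT; apply: contraNneq nd => e01.
  have Fb b : F b = F a0 by apply/eqP; rewrite eq_le min_a0 // andbT e01; exact: max_a1.
  by rewrite -/(F b0) -/(F b1) !Fb.
have dF : F a1 - F a0 != 0 by rewrite subr_eq0 gt_eqF.
have mpt a : mixed_profile (dev s k (pt a)) by apply: mixed_dev; last exact: mixed_pt.
pose al := (H a1 - H a0) / (F a1 - F a0).
exists al, (H a0 - al * F a0); split.
  by rewrite divr_gt0 // subr_gt0 //; apply: ord_lt.
apply: slice_affine_of_pt => b.
pose t := (F b - F a0) / (F a1 - F a0).
have t01 : 0 <= t <= 1.
  rewrite divr_ge0 ?subr_ge0 ?min_a0 ?(ltW lt01) //=.
  by rewrite ler_pdivrMr ?subr_gt0 // mul1r lerD2r; exact: max_a1.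
have mt := mixed_dev ms (mixed_mix t01 (mixed_pt a0) (mixed_pt a1)).
have ft : f (dev s k (mix t (pt a0) (pt a1))) = F b.
  rewrite (multiaffine_mix f_aff t01 (mixed_pt a0) (mixed_pt a1)).
  by rewrite -/(F a0) -/(F a1) /t; field.
rewrite -(ord_eq mt (mpt b) ft).
rewrite (multiaffine_mix h_aff t01 (mixed_pt a0) (mixed_pt a1)).
by rewrite -/(H a0) -/(H a1) -/(F b) /al /t; field.
Qed.

Lemma fully_mixed_slice_gt {s k} : fully_mixed s -> slice_nonconst s k ->
  exists a, f s < f (dev s k (pt a)).
Proof.
move=> fs [b0 [b1 nd]]; apply/existsP; apply: contraTT nd.
rewrite negb_exists negbK => /forallP not_gt; pose F a := f (dev s k (pt a)).
have [s_mixed s_pos] := fs k; have s_sum := s_mixed.2.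
have fsE : f s = \sum_b s k b * F b by rewrite -{1}(dev_id s k) f_aff.
have gap0 : \sum_b s k b * (f s - F b) = 0.
  by under eq_bigr do rewrite mulrBr; rewrite sumrB -mulr_suml s_sum mul1r -fsE subrr.
have gap_ge0 b : 0 <= s k b * (f s - F b).
  by apply: mulr_ge0; [exact: ltW | rewrite subr_ge0 leNgt not_gt].
have Fb b : F b = f s.
  have /eqP := psumr_eq0P (fun b _ => gap_ge0 b) gap0 (i := b) isT.
  by rewrite mulf_eq0 gt_eqF //= subr_eq0 => /eqP.
by rewrite -/(F b0) -/(F b1) !Fb.
Qed.

Lemma fully_mixed_slice_up {s k} : fully_mixed s -> slice_nonconst s k ->
  exists2 d, 0 < d &
    forall e, 0 <= e <= d -> exists2 x, mixed_strat x & f (dev s k x) = f s + e.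
Proof.
move=> fs nd; have [a lt_sa] := fully_mixed_slice_gt fs nd.
pose d := f (dev s k (pt a)) - f s.
have d_gt0 : 0 < d by rewrite subr_gt0.
exists d => // e /andP[e_ge0 e_le].
have t01 : 0 <= e / d <= 1.
  apply/andP; split; first exact: divr_ge0 e_ge0 (ltW d_gt0).
  by rewrite ler_pdivrMr // mul1r.
exists (mix (e / d) (s k) (pt a)); first exact: mixed_mix t01 (fs k).1 (mixed_pt a).
rewrite (multiaffine_mix f_aff t01 (fs k).1 (mixed_pt a)) dev_id /d.
by field; rewrite gt_eqF.
Qed.

(* Raise [f] by the same amount along both slices: [h] rises by [al1 e] and by
   [al2 e] respectively, and these agree since [h] depends on [f] only. *)
Lemma slice_slopes_eq {s t j k al1 c1 al2 c2} :
  fully_mixed s -> fully_mixed t -> slice_nonconst s j -> slice_nonconst t k ->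
  slice_affine s j al1 c1 -> slice_affine t k al2 c2 -> f s = f t -> al1 = al2.
Proof.
move=> fs ft nds ndt A1 A2 fst.
have ms := fully_mixed_mixed fs; have mt := fully_mixed_mixed ft.
have [d1 d1_gt0 up1] := fully_mixed_slice_up fs nds.
have [d2 d2_gt0 up2] := fully_mixed_slice_up ft ndt.
pose e := Num.min d1 d2.
have e_gt0 : 0 < e by rewrite lt_min d1_gt0.
have [x1 mx1 fx1] : exists2 x, mixed_strat x & f (dev s j x) = f s + e.
  by apply: up1; rewrite (ltW e_gt0) /e ge_min lexx.
have [x2 mx2 fx2] : exists2 x, mixed_strat x & f (dev t k x) = f t + e.
  by apply: up2; rewrite (ltW e_gt0) /e ge_min lexx orbT.
have hx : h (dev s j x1) = h (dev t k x2).
  by apply: ord_eq; rewrite ?fx1 ?fx2 ?fst //; exact: mixed_dev.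
have hst : h s = h t by apply: ord_eq.
apply: (mulIf (lt0r_neq0 e_gt0)).
have -> : al1 * e = (al1 * (f s + e) + c1) - (al1 * f s + c1) by ring.
rewrite -fx1 -A1 // -(slice_affine_at ms A1) hx hst.
by rewrite A2 // (slice_affine_at mt A2) fx2; ring.
Qed.

Lemma slice_const_dev {r k x} : mixed_profile r -> ~ slice_nonconst r k ->
  mixed_strat x -> f (dev r k x) = f r /\ h (dev r k x) = h r.
Proof.
move=> mr cr mx.
have [a0 _] := card_gt0P (strat_nonempty k).
have F_a0 a : f (dev r k (pt a)) = f (dev r k (pt a0)).
  by apply/eqP; apply: contra_notT cr => ne; exists a, a0.
have f_slice y : mixed_strat y -> f (dev r k y) = f (dev r k (pt a0)).
  move=> my; rewrite f_aff //; under eq_bigr do rewrite F_a0.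
  by rewrite -mulr_suml my.2 mul1r.
have fx : f (dev r k x) = f r.
  by have := f_slice _ (mr k); rewrite dev_id => ->; apply: f_slice.
by split => //; apply: ord_eq => //; exact: mixed_dev.
Qed.

(* [al] is the slope of [h], as a function of [f], near the level [v]. *)
Definition slope_at (v al : R) := exists s k c,
  [/\ fully_mixed s, slice_nonconst s k, slice_affine s k al c & f s = v].

Lemma slope_at_dev r k x al : fully_mixed r -> fully_mixed_strat x ->
  slope_at (f r) al ->
  slope_at (f (dev r k x)) al /\ h (dev r k x) - al * f (dev r k x) = h r - al * f r.
Proof.
move=> fr fx sl; have mr := fully_mixed_mixed fr.
have [ndr|cr] := pselect (slice_nonconst r k); last first.
  by have [-> ->] := slice_const_dev mr cr fx.1.
have [al' [c [_ Ar]]] := slice_affine_nonconst mr ndr.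
have [s [j [c0 [fs nds As fsr]]]] := sl.
have eal := slice_slopes_eq fs fr nds ndr As Ar fsr; subst al'.
split; first by exists (dev r k x), k, c; split; [exact: fully_mixed_dev |
  exact: slice_nonconst_dev | exact: slice_affine_dev |].
by rewrite (Ar _ fx.1) (slice_affine_at mr Ar); ring.
Qed.

Lemma fully_mixed_affine {s0 k0 al c0} :
  fully_mixed s0 -> slice_nonconst s0 k0 -> slice_affine s0 k0 al c0 ->
  forall t, fully_mixed t -> h t = al * f t + (h s0 - al * f s0).
Proof.
move=> fs0 nd0 A0 t ft.
pose P r := slope_at (f r) al /\ h r - al * f r = h s0 - al * f s0.
suff [_ <-] : P t by ring.
apply: (dev_path_ind (fun j => @fully_mixed_strat (strat G j)) P _ _ fs0 ft).
  by move=> r k x fr fx [sl gap]; rewrite /P -gap; apply: slope_at_dev.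
by split => //; exists s0, k0, c0.
Qed.

Lemma fully_mixed_const {s t} : (forall r k, fully_mixed r -> ~ slice_nonconst r k) ->
  fully_mixed s -> fully_mixed t -> f t = f s /\ h t = h s.
Proof.
move=> const fs ft.
apply: (dev_path_ind (fun j => @fully_mixed_strat (strat G j))
  (fun r => f r = f s /\ h r = h s) _ _ fs ft) => //.
move=> r k x fr fx [<- <-].
exact: slice_const_dev (fully_mixed_mixed fr) (const r k fr) fx.1.
Qed.

Lemma affine_of_fully_mixed {al c} :
  (forall s, fully_mixed s -> h s = al * f s + c) ->
  forall s, mixed_profile s -> h s = al * f s + c.
Proof.
move=> A s ms; apply/eqP; rewrite -subr_eq0; apply/eqP.
by apply: (multiaffine_eq0 (multiaffine_gap al c) _ _ ms) => t ft; rewrite A // subrr.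
Qed.

Theorem multiaffine_ord_equiv_affine : exists beta gamma, 0 < beta /\
  forall s, mixed_profile s -> beta * f s + gamma = h s.
Proof.
have [[s0 [k0 [fs0 nd0]]]|const] :=
  pselect (exists s k, fully_mixed s /\ slice_nonconst s k).
  have [al [c0 [al_gt0 A0]]] := slice_affine_nonconst (fully_mixed_mixed fs0) nd0.
  exists al, (h s0 - al * f s0); split => // s ms.
  by rewrite (affine_of_fully_mixed (fully_mixed_affine fs0 nd0 A0) _ ms).
have slices_const r k : fully_mixed r -> ~ slice_nonconst r k.
  by move=> fr nd; apply: const; exists r, k.
exists 1, (h uniform - f uniform); split => // s ms.
suff A t : fully_mixed t -> h t = 1 * f t + (h uniform - f uniform).
  by rewrite (affine_of_fully_mixed A _ ms).
by move=> ft; have [-> ->] := fully_mixed_const slices_const fully_mixed_uniform ft; ring.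
Qed.

End OrdinalEquivalence.
End Profiles.

Section Transport.
Context {R : realType} {G1 G2 : game R} {g : game_bij G1 G2}.
Implicit Types (s : mprofile G1).

Lemma gtau_bij j : bijective (@gtau _ _ _ g j).
Proof. by exists (gtauinv g); [exact: gtauK | exact: gtauinvK]. Qed.

Lemma gtauinv_bij j : bijective (@gtauinv _ _ _ g j).
Proof. by exists (gtau g); [exact: gtauinvK | exact: gtauK]. Qed.

Lemma gactE s j a : gact g s (gpi g j) (gtau g a) = s j a.
Proof.
rewrite /gact; move: (gpiinvK g (gpi g j)).
have := gpiK g j; move: (gpiinv g (gpi g j)) => k ek e; subst k.
by rewrite (eq_irrelevance e erefl) /= gtauK.
Qed.

Lemma gact_ext (t1 t2 : mprofile G2) :
  (forall j a, t1 (gpi g j) (gtau g a) = t2 (gpi g j) (gtau g a)) -> t1 = t2.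
Proof.
move=> E; apply: functional_extensionality_dep => m; apply: funext.
move: (gpiinvK g m); move: (gpiinv g m) => j e; subst m => b.
by rewrite -(gtauinvK g j b) E.
Qed.

Lemma gact_pi s j : gact g s (gpi g j) = fun b => s j (gtauinv g b).
Proof. by apply: funext => b; rewrite -{1}(gtauinvK g j b) gactE. Qed.

Lemma gact_surj (t : mprofile G2) : exists s, gact g s = t.
Proof.
exists (fun j a => t (gpi g j) (gtau g a)).
by apply: gact_ext => j a; rewrite gactE.
Qed.

Lemma gact_dev s k x :
  gact g (dev s k x) = dev (gact g s) (gpi g k) (fun b => x (gtauinv g b)).
Proof.
apply: gact_ext => j a; rewrite gactE.
case: (eqVneq k j) => [ekj|nkj]; first by subst j; rewrite !dev_in gtauK.
by rewrite !dev_out ?gactE ?(inj_eq (can_inj (gpiK g))).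
Qed.

Lemma dev_gact s j (y : strat G2 (gpi g j) -> R) :
  dev (gact g s) (gpi g j) y = gact g (dev s j (fun a => y (gtau g a))).
Proof. by rewrite gact_dev; congr dev; apply: funext => b; rewrite gtauinvK. Qed.

Lemma mixed_gact s : mixed_profile (gact g s) <-> mixed_profile s.
Proof.
split=> ms j.
  by apply/(mixed_strat_bij (gtauinv_bij j)); rewrite -gact_pi.
by rewrite -(gpiinvK g j) gact_pi; apply/(mixed_strat_bij (gtauinv_bij _)).
Qed.

Lemma pt_gtauinv k (a : strat G1 k) :
  (fun b => pt a (gtauinv g b)) = pt (gtau g a) :> (_ -> R).
Proof.
apply: funext => b; rewrite /pt.
by rewrite -(inj_eq (can_inj (gtauK g k))) gtauinvK.
Qed.

Lemma EU_gact_multiaffine i : multiaffine (fun s => EU (gpi g i) (gact g s)).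
Proof.
move=> s k x mx /=.
rewrite gact_dev EU_multiaffine; last exact/(mixed_strat_bij (gtauinv_bij k)).
rewrite [RHS](reindex (gtauinv g)) /=; last exact/onW_bij/gtauinv_bij.
by apply: eq_bigr => b _; rewrite gact_dev pt_gtauinv gtauinvK.
Qed.

Section CardinalIso.
Hypothesis iso : cardinal_iso g.

Lemma cardinal_iso_lt i {s s'} : mixed_profile s -> mixed_profile s' ->
  EU i s < EU i s' <-> EU (gpi g i) (gact g s) < EU (gpi g i) (gact g s').
Proof.
move=> ms ms'; rewrite !ltNge.
by split=> /negP ns; apply/negP => le; apply: ns; apply/(iso i _ _ ms' ms).
Qed.

Lemma EU_gact_affine :
  (forall j, (0 < #|strat G1 j|)%N) ->
  forall i, exists beta gamma, 0 < beta /\ forall s, mixed_profile s ->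
    beta * EU i s + gamma = EU (gpi g i) (gact g s).
Proof.
move=> nonempty i.
exact: (multiaffine_ord_equiv_affine nonempty (EU_multiaffine i)
  (EU_gact_multiaffine i) (iso i)).
Qed.

Lemma best_resp_gact i s x : mixed_profile s ->
  best_resp i s x <-> best_resp (gpi g i) (gact g s) (fun b => x (gtauinv g b)).
Proof.
move=> ms; split=> [[mx x_best]|[mx' x_best]].
  split; first exact/(mixed_strat_bij (gtauinv_bij i)).
  move=> y my; rewrite dev_gact -gact_dev.
  have my' : mixed_strat (fun a => y (gtau g a)) by apply/(mixed_strat_bij (gtau_bij i)).
  by apply/(iso i _ _ (mixed_dev ms my') (mixed_dev ms mx)); apply: x_best.
have mx : mixed_strat x by apply/(mixed_strat_bij (gtauinv_bij i)).
split=> // y my; apply/(iso i _ _ (mixed_dev ms my) (mixed_dev ms mx)).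
by rewrite !gact_dev; apply: x_best; apply/(mixed_strat_bij (gtauinv_bij i)).
Qed.

Lemma game_best_resp_gact s s' : mixed_profile s -> mixed_profile s' ->
  game_best_resp s s' <-> game_best_resp (gact g s) (gact g s').
Proof.
move=> ms ms'; split=> [[_ br]|[_ br]]; split => //.
- exact/mixed_gact.
- by move=> m; rewrite -(gpiinvK g m) gact_pi; apply/best_resp_gact.
- by move=> i; apply/(best_resp_gact i _ _ ms'); rewrite -gact_pi.
Qed.

Lemma nash_gact s : mixed_profile s -> nash s <-> nash (gact g s).
Proof.
move=> ms; split=> ne.
  move=> m; rewrite -(gpiinvK g m); move: (gpiinv g m) => j y my.
  have my' : mixed_strat (fun a => y (gtau g a)) by apply/(mixed_strat_bij (gtau_bij j)).
  by rewrite dev_gact => /(cardinal_iso_lt j ms (mixed_dev ms my')); apply: ne.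
move=> i y my /(cardinal_iso_lt i ms (mixed_dev ms my)).
by rewrite gact_dev; apply: ne; apply/(mixed_strat_bij (gtauinv_bij i)).
Qed.

Lemma strictly_dominates_gact i x a : mixed_strat x ->
  strictly_dominates i x a <->
  strictly_dominates (gpi g i) (fun b => x (gtauinv g b)) (gtau g a).
Proof.
move=> mx; split=> dom.
  move=> t; have [s <-] := gact_surj t; move=> /mixed_gact ms.
  rewrite -pt_gtauinv -!gact_dev.
  by apply/(cardinal_iso_lt i (mixed_dev ms (mixed_pt a)) (mixed_dev ms mx)); apply: dom.
move=> s ms; apply/(cardinal_iso_lt i (mixed_dev ms (mixed_pt a)) (mixed_dev ms mx)).
by rewrite !gact_dev pt_gtauinv; apply: dom; apply/mixed_gact.
Qed.

End CardinalIso.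
End Transport.

Theorem mainTheorem7 (R : realType) (G1 G2 : game R) (g : game_bij G1 G2) :
  is_game G1 -> is_game G2 -> cardinal_iso g ->
  (forall i : player G1, exists beta gamma : R, 0 < beta /\
     forall s : mprofile G1, mixed_profile s ->
       beta * EU i s + gamma = EU (gpi g i) (gact g s)) /\
  (forall (i : player G1) (s : mprofile G1), mixed_profile s ->
     (best_resp i s (s i) <->
      best_resp (gpi g i) (gact g s) (gact g s (gpi g i)))) /\
  (forall s s' : mprofile G1, mixed_profile s -> mixed_profile s' ->
     (game_best_resp s s' <-> game_best_resp (gact g s) (gact g s'))) /\
  (forall s : mprofile G1, mixed_profile s ->
     (nash s <-> nash (gact g s))) /\
  (forall (i : player G1) (x : strat G1 i -> R) (a : strat G1 i), mixed_strat x ->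
     (strictly_dominates i x a <->
      strictly_dominates (gpi g i) (fun b => x (gtauinv g b)) (gtau g a))).
Proof.
move=> [_ G1_nonempty] _ iso.
split; first exact: EU_gact_affine.
split; first by move=> i s ms; rewrite gact_pi; apply: best_resp_gact.
split; first exact: game_best_resp_gact.
split; first exact: nash_gact.
exact: strictly_dominates_gact.
Qed.
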